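(* Let $C$ be a cotilting right $R$-module with torsion pair $(\mathcal Q,\mathcal C)$, and let $0\to L\xrightarrow{a}M\xrightarrow{b}N\to0$ be a short exact sequence of right $R$-modules. (1) The following are equivalent: (a) $N\in\mathcal Q$ is almost torsion-free and $b$ is a special $\mathcal C$-cover of $N$ in $\mathrm{Mod}\text{-}R$; (b) $L\in\mathrm{Prod}(C)$ and $a$ is a strong left almost split morphism in $\mathcal C$. (2) The following are equivalent: (a) $L\in\mathcal C$ is almost torsion and $a$ is a special $\mathcal C^{\perp_1}$-envelope of $L$ in $\mathrm{Mod}\text{-}R$; (b) $M\in\mathrm{Prod}(C)$ and $b$ is a strong left almost split morphism in $\mathcal C$.
   Context: $R$ is a unital associative ring, $\mathrm{Mod}\text{-}R$ right modules. $\mathrm{Prod}(C)$: direct summands of products of copies of $C$; $\mathrm{Cogen}(C)$: submodules of objects of $\mathrm{Prod}(C)$. $C$ is cotilting if $\mathrm{id}\,C\le1$, $\mathrm{Ext}^1_R(C^\kappa,C)=0$ for all cardinals $\kappa$, and there is an exact sequence $0\to C_1\to C_0\to I\to0$ with $C_i\in\mathrm{Prod}(C)$, $I$ an injective cogenerator. Then $\mathcal C=\mathrm{Cogen}(C)=\{M:\mathrm{Ext}^1_R(M,C)=0\}$ and $\mathcal Q=\{M:\mathrm{Hom}_R(M,C)=0\}$ form a torsion pair (torsion class $\mathcal Q$, torsion-free class $\mathcal C$). $\mathcal C^{\perp_1}=\{M:\mathrm{Ext}^1_R(X,M)=0\ \forall X\in\mathcal C\}$. A nonzero module $T$ is almost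 torsion-free if every proper submodule lies in $\mathcal C$ and for every short exact sequence $0\to A\to B\to T\to0$ with $B\in\mathcal Q$, $A\in\mathcal Q$. A nonzero module $F$ is almost torsion if every proper quotient lies in $\mathcal Q$ and for every short exact sequence $0\to F\to A\to B\to0$ with $A\in\mathcal C$, $B\in\mathcal C$. A special $\mathcal C$-cover of $N$ is an epimorphism $b:M\to N$ with $M\in\mathcal C$, kernel in $\mathcal C^{\perp_1}$, such that every endomorphism $g$ of $M$ with $bg=b$ is an automorphism. A special $\mathcal C^{\perp_1}$-envelope of $L$ is a monomorphism $a:L\to M$ with $M\in\mathcal C^{\perp_1}$, cokernel in $\mathcal C$, such that every endomorphism $g$ of $M$ with $ga=a$ is an automorphism. In a full subcategory $\mathcal X$, $f:X\to Y$ is left almost split if it is not a split monomorphism and every $g:X\to Z$ in $\mathcal X$ that is not a split monomorphism factors as $g=hf$; it is strong if this $h$ is always unique. *)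

From HB Require Import structures.
From mathcomp Require Import all_boot all_order all_algebra.
From mathcomp Require Import boolp classical_sets functions.
Set Implicit Arguments. Unset Strict Implicit. Unset Printing Implicit Defensive.
Import GRing.Theory.
Local Open Scope ring_scope.

(* Right R-modules are modelled as left modules over the converse ring R^c. *)
Section Cotilting.
Variable R : pzRingType.
Notation Mod := (lmodType R^c).

Definition ses (L M N : Mod) (a : {linear L -> M}) (b : {linear M -> N}) : Prop :=
  injective a /\ (forall n : N, exists m : M, b m = n) /\
  (forall m : M, b m = 0 <-> exists l : L, a l = m).

Definition split_mono (X Y : Mod) (f : {linear X -> Y}) : Prop :=
  exists r : {linear Y -> X}, forall x, r (f x) = x.

Definition Ext1_zero (X M : Mod) : Prop :=
  forall (E : Mod) (i : {linear M -> E}) (p : {linear E -> X}),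
    ses i p -> split_mono i.

Definition injective_mod (I : Mod) : Prop :=
  forall (A B : Mod) (i : {linear A -> B}) (f : {linear A -> I}),
    injective i -> exists g : {linear B -> I}, forall x, g (i x) = f x.

Definition cogenerator (I : Mod) : Prop :=
  forall (M : Mod) (m : M), m != 0 -> exists f : {linear M -> I}, f m != 0.

Definition inj_dim_le1 (C : Mod) : Prop :=
  exists (I0 I1 : Mod) (i : {linear C -> I0}) (p : {linear I0 -> I1}),
    ses i p /\ injective_mod I0 /\ injective_mod I1.

Definition inProd (C M : Mod) : Prop :=
  exists (X : Type) (f : {linear M -> (X -> C)}), split_mono f.

Definition inCogen (C M : Mod) : Prop :=
  exists (P : Mod) (f : {linear M -> P}), injective f /\ inProd C P.

Definition cotilting (C : Mod) : Prop :=
  inj_dim_le1 C /\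
  (forall X : Type, Ext1_zero (X -> C : Mod) C) /\
  exists (C1 C0 I : Mod) (i : {linear C1 -> C0}) (p : {linear C0 -> I}),
    ses i p /\ inProd C C1 /\ inProd C C0 /\ injective_mod I /\ cogenerator I.

Definition clC (C M : Mod) : Prop := inCogen C M.
Definition clQ (C M : Mod) : Prop := forall f : {linear M -> C}, forall x, f x = 0.

Definition clCperp (C M : Mod) : Prop := forall X : Mod, clC C X -> Ext1_zero X M.

Definition nonzero_mod (M : Mod) : Prop := exists x : M, x != 0.

(* almost torsion-free; proper submodules are given as non-surjective monos *)
Definition almost_torsion_free (C T : Mod) : Prop :=
  nonzero_mod T /\
  (forall (S : Mod) (i : {linear S -> T}),
      injective i -> ~ (forall t, exists s, i s = t) -> clC C S) /\
  (forall (A B : Mod) (f : {linear A -> B}) (g : {linear B -> T}),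
      ses f g -> clQ C B -> clQ C A).

(* almost torsion; proper quotients are given as non-injective epis *)
Definition almost_torsion (C F : Mod) : Prop :=
  nonzero_mod F /\
  (forall (P : Mod) (q : {linear F -> P}),
      (forall p, exists x, q x = p) -> ~ injective q -> clQ C P) /\
  (forall (A B : Mod) (f : {linear F -> A}) (g : {linear A -> B}),
      ses f g -> clC C A -> clC C B).

Definition automorphism (M : Mod) (g : {linear M -> M}) : Prop := bijective g.

Definition special_C_cover (C M N : Mod) (b : {linear M -> N}) : Prop :=
  (forall n, exists m, b m = n) /\ clC C M /\
  (exists (K : Mod) (k : {linear K -> M}),
      injective k /\ (forall m, b m = 0 <-> exists x, k x = m) /\ clCperp C K) /\
  (forall g : {linear M -> M}, (forall m, b (g m) = b m) -> automorphism g).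

Definition special_Cperp_envelope (C L M : Mod) (a : {linear L -> M}) : Prop :=
  injective a /\ clCperp C M /\
  (exists (P : Mod) (c : {linear M -> P}),
      (forall p, exists m, c m = p) /\ (forall m, c m = 0 <-> exists l, a l = m)
      /\ clC C P) /\
  (forall g : {linear M -> M}, (forall l, g (a l) = a l) -> automorphism g).

Definition strong_left_almost_split (cl : Mod -> Prop) (X Y : Mod)
    (f : {linear X -> Y}) : Prop :=
  cl X /\ cl Y /\ ~ split_mono f /\
  forall (Z : Mod) (g : {linear X -> Z}), cl Z -> ~ split_mono g ->
    exists h : {linear Y -> Z},
      (forall x, g x = h (f x)) /\
      (forall h' : {linear Y -> Z}, (forall x, g x = h' (f x)) -> forall y, h' y = h y).

End Cotilting.

(* Cogen(C) is exactly the left Ext^1-orthogonal of C: it lies inside because id C <= 1 makes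
   that orthogonal closed under submodules and it contains every C^X; conversely the sequence
   0 -> C1 -> C0 -> I -> 0 lifts separating maps into the cogenerator I to maps into C0, which
   lies in Prod(C).  Hence Cogen(C) is closed under extensions, and a module of Cogen(C) that
   is Ext-injective for Cogen(C) is a direct summand of C^Hom(L,C).
   For 0 -> L -> M -> N -> 0, uniqueness of factorisations through a forces Hom(N, C) = 0,
   while a factorisation of g : L -> Z through a is a splitting of the pushout of the sequence
   along g, an extension of N by Z.  The almost torsion-free axioms of N are exactly what
   makes such an extension split unless its middle term is torsion-free, the obstruction being
   the reject of C in the middle term.  Minimality of the cover and of the envelope holds
   because the endomorphisms that are not split monomorphisms factor through a left almost
   split map f, so 1 + d f is invertible.  Part (2) runs along the same lines, with pushouts
   of the extensions starting at L. *)

From HB Require Import structures.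
From mathcomp Require Import all_boot all_order all_algebra.
From mathcomp Require Import boolp classical_sets functions.
Set Implicit Arguments. Unset Strict Implicit. Unset Printing Implicit Defensive.
Import GRing.Theory.
Local Open Scope ring_scope.

(** * Submodules, quotients and factorisations *)

Definition linmap (R : pzRingType) (A B : lmodType R^c) (f : A -> B) (hf : linear f) :
  {linear A -> B} := HB.pack f (GRing.isLinear.Build _ _ _ _ f hf).

Definition is_submodule (R : pzRingType) (V : lmodType R^c) (P : V -> Prop) :=
  [/\ P 0, forall x y, P x -> P y -> P (x + y) & forall k x, P x -> P (k *: x)].

Section Submodule.
Variables (R : pzRingType) (V : lmodType R^c) (P : V -> Prop).
Hypothesis subP : is_submodule P.

Let P0 : P 0. Proof. by case: subP. Qed.
Let PD x y : P x -> P y -> P (x + y). Proof. by case: subP => _ + _; apply. Qed.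
Let PZ k x : P x -> P (k *: x). Proof. by case: subP => _ _; apply. Qed.
Let PN x : P x -> P (- x). Proof. by move=> /(PZ (-1)); rewrite scaleN1r. Qed.

Definition submod_type := {x : V | P x}.

Lemma submod_val_inj : injective (@sval V P).
Proof. by move=> [x hx] [y hy] /= exy; subst y; congr exist; apply: Prop_irrelevance. Qed.

Let sub_add (x y : submod_type) : submod_type := exist _ _ (PD (svalP x) (svalP y)).
Let sub_opp (x : submod_type) : submod_type := exist _ _ (PN (svalP x)).
Let sub_scale k (x : submod_type) : submod_type := exist _ _ (PZ k (svalP x)).

Let sub_addA : associative sub_add.
Proof. by move=> x y z; apply: submod_val_inj; rewrite /= addrA. Qed.
Let sub_addC : commutative sub_add.
Proof. by move=> x y; apply: submod_val_inj; rewrite /= addrC. Qed.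
Let sub_add0 : left_id (exist _ 0 P0) sub_add.
Proof. by move=> x; apply: submod_val_inj; rewrite /= add0r. Qed.
Let sub_addN : left_inverse (exist _ 0 P0) sub_opp sub_add.
Proof. by move=> x; apply: submod_val_inj; rewrite /= addNr. Qed.

HB.instance Definition _ := gen_eqMixin submod_type.
HB.instance Definition _ := gen_choiceMixin submod_type.
HB.instance Definition _ := GRing.isZmodule.Build submod_type sub_addA sub_addC sub_add0 sub_addN.

Let sub_scaleA a b x : sub_scale a (sub_scale b x) = sub_scale (a * b) x.
Proof. by apply: submod_val_inj; rewrite /= scalerA. Qed.
Let sub_scale1 : left_id 1 sub_scale.
Proof. by move=> x; apply: submod_val_inj; rewrite /= scale1r. Qed.
Let sub_scaleDr : right_distributive sub_scale +%R.
Proof. by move=> k x y; apply: submod_val_inj; rewrite /= scalerDr. Qed.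
Let sub_scaleDl x : {morph sub_scale^~ x : a b / a + b}.
Proof. by move=> a b; apply: submod_val_inj; rewrite /= scalerDl. Qed.

HB.instance Definition _ :=
  GRing.Zmodule_isLmodule.Build R^c submod_type sub_scaleA sub_scale1 sub_scaleDr sub_scaleDl.

Lemma submodule_embedding : exists (S : lmodType R^c) (j : {linear S -> V}),
  injective j /\ forall v, P v <-> exists s, j s = v.
Proof.
have lin_val : linear (@sval V P : submod_type -> V) by [].
exists submod_type, (linmap lin_val); split; first exact: submod_val_inj.
by move=> v; split=> [Pv | [s <-]]; [exists (exist _ v Pv) | apply: svalP].
Qed.

(* Elements of the quotient are the cosets of P, as predicates on V. *)
Definition coset (v : V) : V -> Prop := fun x => P (x - v).
Definition quot_type := {A : V -> Prop | exists v, A = coset v}.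

Definition qproj (v : V) : quot_type := exist _ (coset v) (ex_intro _ v erefl).
Let rep (A : quot_type) : V := sval (cid (svalP A)).

Let quot_val_inj : injective (@sval _ (fun A => exists v, A = coset v)).
Proof. by move=> [A hA] [B hB] /= eAB; subst B; congr exist; apply: Prop_irrelevance. Qed.

Lemma qproj_eq v w : qproj v = qproj w <-> P (v - w).
Proof.
split=> [/(congr1 (fun A => sval A v)) /= | Pvw].
  by rewrite /coset subrr => <-.
apply: quot_val_inj => /=; apply/funext => x; apply/propext; rewrite /coset; split=> Px.
  by have := PD Px Pvw; rewrite addrA subrK.
by have := PD Px (PN Pvw); rewrite opprB addrA subrK.
Qed.

Let qproj_rep A : qproj (rep A) = A.
Proof. by rewrite /rep; case: (cid (svalP A)) => v /= defA; apply: quot_val_inj. Qed.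

Lemma qproj_surj A : exists v, qproj v = A.
Proof. by exists (rep A); rewrite qproj_rep. Qed.

Let qadd A B := qproj (rep A + rep B).
Let qopp A := qproj (- rep A).
Let qscale k A := qproj (k *: rep A).

Let qprojD v w : qproj (v + w) = qadd (qproj v) (qproj w).
Proof.
apply/qproj_eq; set v' := rep (qproj v); set w' := rep (qproj w).
have Pv : P (v' - v) by apply/qproj_eq; rewrite qproj_rep.
have Pw : P (w' - w) by apply/qproj_eq; rewrite qproj_rep.
suff -> : v + w - (v' + w') = - ((v' - v) + (w' - w)) by apply/PN/PD.
by rewrite opprD addrACA opprD !opprB.
Qed.
Let qprojN v : qproj (- v) = qopp (qproj v).
Proof.
apply/qproj_eq; rewrite opprK addrC; apply/qproj_eq.
by rewrite qproj_rep.
Qed.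
Let qprojZ k v : qproj (k *: v) = qscale k (qproj v).
Proof.
apply/qproj_eq; rewrite -scalerBr; apply: PZ; apply/qproj_eq.
by rewrite qproj_rep.
Qed.

Let qaddA : associative qadd.
Proof.
move=> A B D; case: (qproj_surj A) => a <-; case: (qproj_surj B) => b <-.
case: (qproj_surj D) => d <-.
by rewrite -!qprojD addrA.
Qed.
Let qaddC : commutative qadd.
Proof.
move=> A B; case: (qproj_surj A) => a <-; case: (qproj_surj B) => b <-.
by rewrite -!qprojD addrC.
Qed.
Let qadd0 : left_id (qproj 0) qadd.
Proof. by move=> A; have [a <-] := qproj_surj A; rewrite -qprojD add0r. Qed.
Let qaddN : left_inverse (qproj 0) qopp qadd.
Proof. by move=> A; have [a <-] := qproj_surj A; rewrite -qprojN -qprojD addNr. Qed.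

HB.instance Definition _ := gen_eqMixin quot_type.
HB.instance Definition _ := gen_choiceMixin quot_type.
HB.instance Definition _ := GRing.isZmodule.Build quot_type qaddA qaddC qadd0 qaddN.

Let qprojD' v w : qproj (v + w) = qproj v + qproj w. Proof. exact: qprojD. Qed.

Let qscaleA a b A : qscale a (qscale b A) = qscale (a * b) A.
Proof. by have [v <-] := qproj_surj A; rewrite -!qprojZ scalerA. Qed.
Let qscale1 : left_id 1 qscale.
Proof. by move=> A; have [v <-] := qproj_surj A; rewrite -qprojZ scale1r. Qed.
Let qscaleDr : right_distributive qscale +%R.
Proof.
move=> k A B; case: (qproj_surj A) => v <-; case: (qproj_surj B) => w <-.
by rewrite -qprojD' -!qprojZ -qprojD' scalerDr.
Qed.
Let qscaleDl A : {morph qscale^~ A : a b / a + b}.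
Proof.
by move=> a b; have [v <-] := qproj_surj A; rewrite -!qprojZ -qprojD' scalerDl.
Qed.

HB.instance Definition _ :=
  GRing.Zmodule_isLmodule.Build R^c quot_type qscaleA qscale1 qscaleDr qscaleDl.

Lemma quotient_projection : exists (Q : lmodType R^c) (q : {linear V -> Q}),
  (forall y, exists x, q x = y) /\ forall x, q x = 0 <-> P x.
Proof.
have lin_qproj : linear (qproj : V -> quot_type).
  by move=> k v w; rewrite qprojD' qprojZ.
exists quot_type, (linmap lin_qproj); split; first exact: qproj_surj.
by move=> x; have := qproj_eq x 0; rewrite subr0; apply.
Qed.

End Submodule.


Section ExactSequences.
Variable R : pzRingType.
Local Notation Mod := (lmodType R^c).

Lemma factor_through_epi (E Z Y : Mod) (p : {linear E -> Z}) (phi : {linear E -> Y}) :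
  (forall z, exists e, p e = z) -> (forall e, p e = 0 -> phi e = 0) ->
  exists psi : {linear Z -> Y}, forall e, psi (p e) = phi e.
Proof.
move=> p_surj phi_ker.
pose s z := sval (cid (p_surj z)).
have ps z : p (s z) = z by rewrite /s; case: cid.
have phi_fib e e' : p e = p e' -> phi e = phi e'.
  by move=> pe; apply/subr0_eq; rewrite -linearB phi_ker // linearB pe subrr.
have lin_s : linear (fun z => phi (s z)).
  by move=> k u v /=; rewrite -linearP; apply: phi_fib; rewrite linearP !ps.
by exists (linmap lin_s) => e /=; apply: phi_fib; rewrite ps.
Qed.

Lemma factor_through_mono (X L M : Mod) (a : {linear L -> M}) (phi : {linear X -> M}) :
  injective a -> (forall x, exists l, a l = phi x) ->
  exists psi : {linear X -> L}, forall x, a (psi x) = phi x.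
Proof.
move=> a_inj phi_im; pose s x := sval (cid (phi_im x)).
have as_ x : a (s x) = phi x by rewrite /s; case: cid.
have lin_s : linear s by move=> k u v; apply: a_inj; rewrite linearP !as_ linearP.
by exists (linmap lin_s).
Qed.

Lemma kernel_is_submodule (A B : Mod) (u : {linear A -> B}) :
  is_submodule (fun x => u x = 0).
Proof.
by split=> [|x y ux uy|c x ux]; rewrite ?linear0 ?linearD ?linearZZ ?ux ?uy ?addr0 ?scaler0.
Qed.

Lemma image_is_submodule (A B : Mod) (u : {linear A -> B}) :
  is_submodule (fun y => exists x, u x = y).
Proof.
split=> [|_ _ [x <-] [y <-]|c _ [x <-]].
- by exists 0; rewrite linear0.
- by exists (x + y); rewrite linearD.
- by exists (c *: x); rewrite linearZ.
Qed.

Lemma kernel_embedding (A B : Mod) (u : {linear A -> B}) :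
  exists (K : Mod) (k : {linear K -> A}),
    injective k /\ forall x, u x = 0 <-> exists y, k y = x.
Proof. exact: submodule_embedding (kernel_is_submodule u). Qed.

Lemma cokernel_projection (A B : Mod) (f : {linear A -> B}) :
  exists (Q : Mod) (q : {linear B -> Q}),
    (forall y, exists x, q x = y) /\ forall y, q y = 0 <-> exists x, f x = y.
Proof. exact: quotient_projection (image_is_submodule f). Qed.

Lemma image_factorization (A B : Mod) (u : {linear A -> B}) :
  exists (U : Mod) (j : {linear U -> B}) (v : {linear A -> U}),
    [/\ injective j, forall x, j (v x) = u x & forall y, exists x, v x = y].
Proof.
have [U [j [j_inj jE]]] := submodule_embedding (image_is_submodule u).
have [v jv] := factor_through_mono j_inj (fun x => proj1 (jE (u x)) (ex_intro _ x erefl)).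
exists U, j, v; split=> // z; have [x ux] := proj2 (jE (j z)) (ex_intro _ z erefl).
by exists x; apply: j_inj; rewrite jv.
Qed.

Lemma ses_comp0 (K E Z : Mod) (i : {linear K -> E}) (p : {linear E -> Z}) :
  ses i p -> forall k, p (i k) = 0.
Proof. by move=> [_ [_ kerp]] k; apply/kerp; exists k. Qed.

Lemma split_mono_inj (X Y : Mod) (f : {linear X -> Y}) : split_mono f -> injective f.
Proof. by case=> r rf x y fxy; rewrite -(rf x) -(rf y) fxy. Qed.

Lemma ses_split_monoP (K E Z : Mod) (i : {linear K -> E}) (p : {linear E -> Z}) :
  ses i p -> split_mono i <-> exists s : {linear Z -> E}, forall z, p (s z) = z.
Proof.
move=> sesip; have [i_inj [p_surj kerp]] := sesip; split=> [[r ri] | [s ps]].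
  have [e /kerp [k <-] /= | s sp] := factor_through_epi (phi := idfun \- (i \o r)) p_surj.
    by rewrite ri subrr.
  by exists s => z; have [e <-] := p_surj z; rewrite sp /= linearB (ses_comp0 sesip) subr0.
have [e' | r ir] := factor_through_mono (phi := idfun \- (s \o p)) i_inj.
  by apply/kerp; rewrite /= linearB ps subrr.
by exists r => k; apply: i_inj; rewrite ir /= (ses_comp0 sesip) linear0 subr0.
Qed.

Lemma ses_split_section (K E Z : Mod) (i : {linear K -> E}) (p : {linear E -> Z}) :
  ses i p -> split_mono i -> exists s : {linear Z -> E}, injective s.
Proof.
move=> sesip /(ses_split_monoP sesip) [s ps].
by exists s => z z' szz; rewrite -(ps z) -(ps z') szz.
Qed.

End ExactSequences.

(** * Pullbacks and pushouts *)

Section Squares.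
Variable R : pzRingType.
Local Notation Mod := (lmodType R^c).

Lemma pair_ext (A B : Mod) (u v : (A * B)%type) : u.1 = v.1 -> u.2 = v.2 -> u = v.
Proof. by case: u v => [? ?] [? ?] /= -> ->. Qed.

Definition is_pullback (M B N P : Mod) (b : {linear M -> N}) (g : {linear B -> N})
    (p1 : {linear P -> M}) (p2 : {linear P -> B}) :=
  [/\ forall x, b (p1 x) = g (p2 x),
      forall x y, p1 x = p1 y -> p2 x = p2 y -> x = y &
      forall m y, b m = g y -> exists x, p1 x = m /\ p2 x = y].

Definition is_pushout (A E K Q : Mod) (i : {linear A -> E}) (u : {linear A -> K})
    (i' : {linear K -> Q}) (eps : {linear E -> Q}) :=
  [/\ forall a, eps (i a) = i' (u a),
      forall q, exists k e, q = i' k + eps e &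
      forall (W : Mod) (v : {linear K -> W}) (w : {linear E -> W}),
        (forall a, v (u a) = w (i a)) ->
        exists t : {linear Q -> W}, (forall k, t (i' k) = v k) /\ forall e, t (eps e) = w e].

Lemma is_pullback_sym (M B N P : Mod) (b : {linear M -> N}) (g : {linear B -> N})
    (p1 : {linear P -> M}) (p2 : {linear P -> B}) :
  is_pullback b g p1 p2 -> is_pullback g b p2 p1.
Proof.
case=> comm jinj fib; split=> [x | x y e2 e1 | y m /esym /fib [x [? ?]]].
- exact/esym/comm.
- exact: jinj.
- by exists x.
Qed.

Lemma is_pushout_sym (A E K Q : Mod) (i : {linear A -> E}) (u : {linear A -> K})
    (i' : {linear K -> Q}) (eps : {linear E -> Q}) :
  is_pushout i u i' eps -> is_pushout u i eps i'.
Proof.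
case=> comm gen univ; split=> [a | q | W v w vw].
- exact/esym/comm.
- by have [k [e ->]] := gen q; exists e, k; rewrite addrC.
- by have [t [ti' teps]] := univ _ w v (fun a => esym (vw a)); exists t.
Qed.

Lemma pullback_exists (M B N : Mod) (b : {linear M -> N}) (g : {linear B -> N}) :
  exists (P : Mod) (p1 : {linear P -> M}) (p2 : {linear P -> B}), is_pullback b g p1 p2.
Proof.
have [P [j [j_inj jE]]] : exists (P : Mod) (j : {linear P -> (M * B)%type}),
    injective j /\ forall v, b v.1 = g v.2 <-> exists x, j x = v.
  apply: submodule_embedding.
  by split=> [|u v bu bv|c v bv] /=; rewrite ?linear0 ?linearD ?linearZZ ?bu ?bv.
have lin1 : linear (fun x => (j x).1) by move=> c x y; rewrite linearP.
have lin2 : linear (fun x => (j x).2) by move=> c x y; rewrite linearP.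
exists P, (linmap lin1), (linmap lin2); split=> /=.
- by move=> x; apply/jE; exists x.
- by move=> x y e1 e2; apply: j_inj; apply: pair_ext.
- by move=> m y /(jE (m, y)) [x jx]; exists x; rewrite jx.
Qed.

Lemma pushout_exists (A E K : Mod) (i : {linear A -> E}) (u : {linear A -> K}) :
  exists (Q : Mod) (i' : {linear K -> Q}) (eps : {linear E -> Q}),
    [/\ is_pushout i u i' eps, injective i -> injective i' & injective u -> injective eps].
Proof.
have lin_ui : linear (fun a => (u a, - i a) : (K * E)%type).
  by move=> c x y; apply: pair_ext; rewrite /= !linearP // opprD scalerN.
have [Q [q [q_surj kerq]]] := cokernel_projection (linmap lin_ui).
have lin1 : linear (fun k => q ((k, 0) : (K * E)%type)).
  by move=> c x y; rewrite -linearP; congr (q _); apply: pair_ext; rewrite /= ?scaler0 ?addr0.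
have lin2 : linear (fun e => q ((0, e) : (K * E)%type)).
  by move=> c x y; rewrite -linearP; congr (q _); apply: pair_ext; rewrite /= ?scaler0 ?addr0.
exists Q, (linmap lin1), (linmap lin2); split; first split=> /=.
- move=> a; apply/subr0_eq; rewrite -linearB; apply/kerq; exists (- a).
  by apply: pair_ext; rewrite /= !linearN ?opprK ?sub0r ?subr0.
- move=> y; have [v <-] := q_surj y; exists v.1, v.2; rewrite -linearD.
  by congr (q _); apply: pair_ext; rewrite /= ?addr0 ?add0r.
- move=> W v w vw.
  have lin_vw : linear (fun x : (K * E)%type => v x.1 + w x.2).
    by move=> c x y; rewrite !linearP scalerDr addrACA.
  have [x /kerq [a <-] | t tq] := factor_through_epi (phi := linmap lin_vw) q_surj.
    by rewrite /= linearN vw subrr.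
  by exists t; split=> [k | e]; rewrite tq /= ?linear0 ?addr0 ?add0r.
- move=> i_inj; apply: (@raddf_inj _ _ (linmap lin1)) => k /kerq [a] /= [uak /eqP].
  rewrite oppr_eq0 => /eqP ia0; have a0 : a = 0 by apply: i_inj; rewrite ia0 linear0.
  by rewrite -uak a0 linear0.
- move=> u_inj; apply: (@raddf_inj _ _ (linmap lin2)) => e /kerq [a] /= [ua0 iae].
  have a0 : a = 0 by apply: u_inj; rewrite ua0 linear0.
  by rewrite -iae a0 linear0 oppr0.
Qed.

End Squares.

Section Pullback.
Variable R : pzRingType.
Local Notation Mod := (lmodType R^c).
Variables (M B N P : Mod) (b : {linear M -> N}) (g : {linear B -> N}).
Variables (p1 : {linear P -> M}) (p2 : {linear P -> B}).
Hypothesis pb : is_pullback b g p1 p2.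

Lemma pullback_lift (X : Mod) (u : {linear X -> M}) (v : {linear X -> B}) :
  (forall x, b (u x) = g (v x)) ->
  exists w : {linear X -> P}, forall x, p1 (w x) = u x /\ p2 (w x) = v x.
Proof.
have [_ jinj fib] := pb; move=> uv; pose w x := sval (cid (fib _ _ (uv x))).
have w1 x : p1 (w x) = u x by rewrite /w; case: cid => ? [].
have w2 x : p2 (w x) = v x by rewrite /w; case: cid => ? [].
have lin_w : linear w.
  by move=> c x y; apply: jinj; rewrite !linearP !(w1, w2) linearP.
by exists (linmap lin_w).
Qed.

Lemma pullback_mono : injective g -> injective p1.
Proof.
have [comm jinj _] := pb; move=> g_inj x y e1; apply: jinj => //.
by apply: g_inj; rewrite -!comm e1.
Qed.

Lemma pullback_ses (L : Mod) (a : {linear L -> M}) : ses a b ->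
  exists a' : {linear L -> P}, ses a' p2 /\ forall l, p1 (a' l) = a l.
Proof.
have [comm jinj fib] := pb; move=> sesab; have [a_inj [b_surj kerb]] := sesab.
have [|a' a'E] := pullback_lift (u := a) (v := \0).
  by move=> l; rewrite (ses_comp0 sesab) /= linear0.
have a'1 l : p1 (a' l) = a l by case: (a'E l).
have a'2 l : p2 (a' l) = 0 by case: (a'E l).
exists a'; split=> //; split; first by move=> x y e; apply: a_inj; rewrite -!a'1 e.
split=> [y | x].
  by have [m bm] := b_surj (g y); have [x [_ <-]] := fib _ _ bm; exists x.
split=> [p2x | [l <-]] //.
have /kerb [l al] : b (p1 x) = 0 by rewrite comm p2x linear0.
by exists l; apply: jinj; rewrite ?a'1 ?a'2.
Qed.

End Pullback.

Section Pushout.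
Variable R : pzRingType.
Local Notation Mod := (lmodType R^c).
Variables (A E K Q : Mod) (i : {linear A -> E}) (u : {linear A -> K}).
Variables (i' : {linear K -> Q}) (eps : {linear E -> Q}).
Hypothesis po : is_pushout i u i' eps.

Lemma pushout_ses (Z : Mod) (p : {linear E -> Z}) : ses i p -> injective i' ->
  exists p' : {linear Q -> Z}, ses i' p' /\ forall e, p' (eps e) = p e.
Proof.
have [comm gen univ] := po; move=> sesip i'_inj; have [_ [p_surj kerp]] := sesip.
have [|p' [p'i' p'eps]] := univ _ \0 p.
  by move=> a; rewrite (ses_comp0 sesip).
exists p'; split=> //; split=> //; split=> [z | y].
  by have [e <-] := p_surj z; exists (eps e).
split=> [|[k <-]] //; have [k [e ->]] := gen y.
rewrite linearD p'i' p'eps add0r => /kerp [a <-].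
by exists (k + u a); rewrite comm linearD.
Qed.

End Pushout.

(** * Vanishing of Ext^1 *)

Section Ext1.
Variable R : pzRingType.
Local Notation Mod := (lmodType R^c).

Lemma Ext1_zero_lift (X K E Y : Mod) (i : {linear K -> E}) (p : {linear E -> Y})
    (phi : {linear X -> Y}) :
  Ext1_zero X K -> ses i p -> exists psi : {linear X -> E}, forall x, p (psi x) = phi x.
Proof.
move=> extXK sesip.
have [P [p1 [p2 pb]]] := pullback_exists p phi; have [comm _ _] := pb.
have [i' [sesi' _]] := pullback_ses pb sesip.
have [s p2s] := (ses_split_monoP sesi').1 (extXK _ _ _ sesi').
by exists (p1 \o s) => x /=; rewrite comm p2s.
Qed.

Lemma Ext1_zero_extend (X K A Z : Mod) (u : {linear A -> Z}) (c : {linear Z -> X})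
    (f : {linear A -> K}) :
  Ext1_zero X K -> ses u c -> exists g : {linear Z -> K}, forall x, g (u x) = f x.
Proof.
move=> extXK sesuc.
have [Q [i' [eps [po i'_inj _]]]] := pushout_exists u f; have [comm _ _] := po.
have [c' [sesc' _]] := pushout_ses po sesuc (i'_inj (proj1 sesuc)).
have [r ri] := extXK _ _ _ sesc'.
by exists (r \o eps) => x /=; rewrite comm ri.
Qed.

Lemma Ext1_zero_retract (Z K K' : Mod) (s : {linear K -> K'}) (r : {linear K' -> K}) :
  (forall k, r (s k) = k) -> Ext1_zero Z K' -> Ext1_zero Z K.
Proof.
move=> rs extZK' E i p sesip.
have [g gi] := Ext1_zero_extend s extZK' sesip.
by exists (r \o g) => k /=; rewrite gi rs.
Qed.

Lemma Ext1_zero_prod (Z K : Mod) (Y : Type) : Ext1_zero Z K -> Ext1_zero Z (Y -> K).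
Proof.
move=> extZK E i p sesip.
have ev y : exists g : {linear E -> K}, forall v, g (i v) = v y.
  have lin_ev : linear (fun v : Y -> K => v y) by [].
  exact: Ext1_zero_extend (linmap lin_ev) extZK sesip.
have [G GE] := choice ev.
have lin_G : linear (fun e => (fun y => G y e) : Y -> K).
  by move=> c e e'; apply/funext => y /=; rewrite linearP.
by exists (linmap lin_G) => v; apply/funext => y /=; rewrite GE.
Qed.

Lemma Ext1_zero_of_lift (Z K J0 J1 : Mod) (j : {linear K -> J0}) (q : {linear J0 -> J1}) :
  injective j -> (forall y, q y = 0 <-> exists k, j k = y) -> injective_mod J0 ->
  (forall phi : {linear Z -> J1}, exists psi : {linear Z -> J0}, forall z, q (psi z) = phi z) ->
  Ext1_zero Z K.
Proof.
move=> j_inj kerq injJ0 lift E i p sesip; have [i_inj [p_surj kerp]] := sesip.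
have [f fi] := injJ0 _ _ i j i_inj.
have [e /kerp [k <-] | phi phip] := factor_through_epi (phi := q \o f) p_surj.
  by rewrite /= fi; apply/kerq; exists k.
have [psi qpsi] := lift phi.
have [e | r jr] := factor_through_mono (phi := f \- (psi \o p)) j_inj.
  by apply/kerq; rewrite /= linearB qpsi phip subrr.
by exists r => k; apply: j_inj; rewrite jr /= fi (ses_comp0 sesip) linear0 subr0.
Qed.

End Ext1.

(** * The cotilting torsion pair *)

Section TorsionPair.
Variable R : pzRingType.
Local Notation Mod := (lmodType R^c).
Variable C : Mod.

Lemma clC_sub (X Y : Mod) (f : {linear X -> Y}) : injective f -> clC C Y -> clC C X.
Proof.
move=> f_inj [P [g [g_inj PP]]]; exists P, (g \o f); split=> //.
by move=> x y /= /g_inj /f_inj.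
Qed.

Lemma inProd_clC (X : Mod) : inProd C X -> clC C X.
Proof. by exists X, idfun. Qed.

Lemma inProd_prod (Y : Type) : inProd C (Y -> C).
Proof. by exists Y, idfun, idfun. Qed.

Lemma inProd_self : inProd C C.
Proof.
have lin_c : linear (fun c : C => (fun _ : unit => c)) by move=> k x y; apply/funext.
have lin_tt : linear (fun v : unit -> C => v tt) by [].
by exists unit, (linmap lin_c), (linmap lin_tt).
Qed.

Lemma clC_self : clC C C.
Proof. exact: inProd_clC inProd_self. Qed.

Lemma clC_sepP (X : Mod) :
  clC C X <-> forall x : X, x != 0 -> exists phi : {linear X -> C}, phi x != 0.
Proof.
split=> [[P [g [g_inj [Y [s s_split]]]]] x x0 | sepX].
  have sgx0 : s (g x) != 0.
    apply: contra x0 => /eqP sgx; apply/eqP/g_inj/(split_mono_inj s_split).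
    by rewrite sgx !linear0.
  have [[y sgxy] | all0] := pselect (exists y, s (g x) y != 0).
    have lin_y : linear (fun v : Y -> C => v y) by [].
    by exists (linmap lin_y \o s \o g).
  by case/negP: sgx0; apply/eqP/funext => y; apply/eqP/negPn/negP => ?; apply: all0; exists y.
have sep x : exists phi : {linear X -> C}, x != 0 -> phi x != 0.
  by have [-> | /sepX [phi ?]] := eqVneq x 0; [exists \0 | exists phi].
have [F FE] := choice sep.
have lin_F : linear (fun x => (fun y => F y x) : X -> C).
  by move=> c u v; apply/funext => y /=; rewrite linearP.
exists (X -> C), (linmap lin_F); split; last exact: inProd_prod.
apply: raddf_inj => x /(congr1 (fun v => v x)) /= Fx0.
by apply/eqP/negP => /negP /FE; rewrite Fx0 eqxx.
Qed.

Lemma clQ_clC_hom0 (N Z : Mod) (f : {linear N -> Z}) :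
  clQ C N -> clC C Z -> forall n, f n = 0.
Proof.
move=> QN /clC_sepP sepZ n; apply/eqP/negP => /negP /sepZ [phi].
by have := QN (phi \o f) n; rewrite /= => ->; rewrite eqxx.
Qed.

Lemma clQ_clC_trivial (X : Mod) : clQ C X -> clC C X -> forall x : X, x = 0.
Proof. exact: clQ_clC_hom0 idfun. Qed.

Lemma clQ_quot (X Y : Mod) (q : {linear X -> Y}) :
  (forall y, exists x, q x = y) -> clQ C X -> clQ C Y.
Proof. by move=> q_surj QX f y; have [x <-] := q_surj y; apply: (QX (f \o q)). Qed.

Lemma clC_split_coker (K E Z : Mod) (i : {linear K -> E}) (p : {linear E -> Z}) :
  ses i p -> split_mono i -> clC C E -> clC C Z.
Proof. by move=> sesip /(ses_split_section sesip) [s s_inj]; apply: clC_sub s_inj. Qed.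

End TorsionPair.

Definition lifts_along (R : pzRingType) (I0 I1 Z : lmodType R^c) (p0 : {linear I0 -> I1}) :=
  forall phi : {linear Z -> I1}, exists psi : {linear Z -> I0}, forall z, p0 (psi z) = phi z.

Section InjectiveDimensionOne.
Variable R : pzRingType.
Local Notation Mod := (lmodType R^c).
Variable C : Mod.
Hypothesis idC : inj_dim_le1 C.

Lemma Ext1_zero_liftsP (I0 I1 Z : Mod) (i0 : {linear C -> I0}) (p0 : {linear I0 -> I1}) :
  ses i0 p0 -> injective_mod I0 -> Ext1_zero Z C <-> lifts_along Z p0.
Proof.
move=> sesC injI0; split=> [extZ phi | ]; first exact: Ext1_zero_lift extZ sesC.
have [i0_inj [_ kerp0]] := sesC; exact: Ext1_zero_of_lift i0_inj kerp0 injI0.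
Qed.

Lemma Ext1_zero_sub (Z W : Mod) (f : {linear Z -> W}) :
  injective f -> Ext1_zero W C -> Ext1_zero Z C.
Proof.
have [I0 [I1 [i0 [p0 [sesC [injI0 injI1]]]]]] := idC.
rewrite !(Ext1_zero_liftsP _ sesC injI0) => f_inj liftW phi.
have [phi' phi'f] := injI1 _ _ f phi f_inj.
have [psi p0psi] := liftW phi'.
by exists (psi \o f) => z /=; rewrite p0psi phi'f.
Qed.

Lemma Ext1_zero_ext (A P B : Mod) (i : {linear A -> P}) (p : {linear P -> B}) :
  ses i p -> Ext1_zero A C -> Ext1_zero B C -> Ext1_zero P C.
Proof.
have [I0 [I1 [i0 [p0 [sesC [injI0 _]]]]]] := idC.
rewrite !(Ext1_zero_liftsP _ sesC injI0) => sesip liftA liftB phi.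
have [i_inj [p_surj kerp]] := sesip.
have [psiA p0psiA] := liftA (phi \o i).
have [psi' psi'i] := injI0 _ _ i psiA i_inj.
have [x /kerp [a <-] | chi chip] := factor_through_epi (phi := phi \- (p0 \o psi')) p_surj.
  by rewrite /= psi'i p0psiA subrr.
have [psiB p0psiB] := liftB chi.
exists (psi' \+ (psiB \o p)) => x /=.
by rewrite linearD p0psiB chip /= addrC subrK.
Qed.

Lemma Ext1_zero_coker (L P Z : Mod) (i : {linear L -> P}) (p : {linear P -> Z}) :
  ses i p -> Ext1_zero P C ->
  (forall w : {linear L -> C}, exists w' : {linear P -> C}, forall l, w' (i l) = w l) ->
  Ext1_zero Z C.
Proof.
have [I0 [I1 [i0 [p0 [sesC [injI0 _]]]]]] := idC.
rewrite !(Ext1_zero_liftsP _ sesC injI0) => sesip liftP ext phi.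
have [i_inj [p_surj kerp]] := sesip; have [i0_inj [_ kerp0]] := sesC.
have [psi p0psi] := liftP (phi \o p).
have [l | w i0w] := factor_through_mono (phi := psi \o i) i0_inj.
  by apply/kerp0; rewrite /= p0psi /= (ses_comp0 sesip) linear0.
have [w' w'i] := ext w.
have [x /kerp [l <-] | chi chip] := factor_through_epi (phi := psi \- (i0 \o w')) p_surj.
  by rewrite /= w'i i0w subrr.
exists chi => z; have [x <-] := p_surj z.
by rewrite chip /= linearB p0psi (ses_comp0 sesC) subr0.
Qed.

End InjectiveDimensionOne.

Section Cotilting.
Variable R : pzRingType.
Local Notation Mod := (lmodType R^c).
Variable C : Mod.
Hypothesis cotC : cotilting C.

Lemma clC_Ext1P (Z : Mod) : clC C Z <-> Ext1_zero Z C.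
Proof.
have [idC [extCC [C1 [C0 [I [j1 [pi1 [ses1 [PC1 [PC0 [_ cogI]]]]]]]]]]] := cotC.
split=> [[P [g [g_inj [Y [s s_split]]]]] | extZ].
  apply: (Ext1_zero_sub idC (f := s \o g)) (extCC Y).
  by move=> x y /= /(split_mono_inj s_split) /g_inj.
apply/clC_sepP => z /cogI [f fz].
have extZC1 : Ext1_zero Z C1.
  by have [Y [s [r rs]]] := PC1; apply: Ext1_zero_retract rs (Ext1_zero_prod (Y := Y) extZ).
have [F pi1F] := Ext1_zero_lift f extZC1 ses1.
have [|phi phiF] := (clC_sepP _ _).1 (inProd_clC PC0) (F z).
  by apply: contra fz => /eqP Fz; rewrite -pi1F Fz linear0.
by exists (phi \o F).
Qed.

Lemma clC_ext (A P B : Mod) (i : {linear A -> P}) (p : {linear P -> B}) :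
  ses i p -> clC C A -> clC C B -> clC C P.
Proof.
have [idC _] := cotC.
by rewrite !clC_Ext1P; apply: Ext1_zero_ext.
Qed.

Lemma inProd_clCperp (P : Mod) : inProd C P -> clCperp C P.
Proof.
move=> [Y [s [r rs]]] X /clC_Ext1P extX.
exact: Ext1_zero_retract rs (Ext1_zero_prod (Y := Y) extX).
Qed.

Lemma inProd_clC_clCperp (L : Mod) : clC C L -> clCperp C L -> inProd C L.
Proof.
have [idC [extCC _]] := cotC.
move=> /clC_sepP sepL perpL; pose Y := {linear L -> C}.
have lin_ev : linear (fun l : L => (fun w : Y => w l)).
  by move=> c x y; apply/funext => w /=; rewrite linearP.
pose ev := linmap lin_ev.
have ev_inj : injective ev.
  apply: raddf_inj => l evl; apply/eqP/negP => /negP /sepL [w].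
  by have := congr1 (fun v => v w) evl; rewrite /= => ->; rewrite eqxx.
have [Z [pi [pi_surj kerpi]]] := cokernel_projection ev.
have sesev : ses ev pi by [].
have extZ : Ext1_zero Z C.
  apply: (Ext1_zero_coker idC sesev (extCC Y)) => w.
  have lin_w : linear (fun v : Y -> C => v w) by [].
  by exists (linmap lin_w).
by exists Y, ev; apply: perpL Z ((clC_Ext1P Z).2 extZ) _ _ _ sesev.
Qed.

Lemma reject_clQ (E : Mod) : exists (T : Mod) (j : {linear T -> E}),
  [/\ injective j, forall x, (forall phi : {linear E -> C}, phi x = 0) <-> exists t, j t = x
    & clQ C T].
Proof.
have lin_ev : linear (fun x : E => (fun phi : {linear E -> C} => phi x)).
  by move=> c x y; apply/funext => phi /=; rewrite linearP.
have [T [j [j_inj kerE]]] := kernel_embedding (linmap lin_ev).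
have rejE x : (forall phi : {linear E -> C}, phi x = 0) <-> exists t, j t = x.
  rewrite -kerE; split=> [x0 | /= x0 phi]; first exact/funext.
  by have := congr1 (fun v => v phi) x0.
exists T, j; split=> // psi t.
have [Q [pi [pi_surj kerpi]]] := cokernel_projection j.
have CQ : clC C Q.
  apply/clC_sepP => y; have [x <-] := pi_surj y => pix.
  have [[phi phix] | all0] := pselect (exists phi : {linear E -> C}, phi x != 0).
    have [e /kerpi [t' <-] | phi' phi'pi] := factor_through_epi (phi := phi) pi_surj.
      by apply/(rejE (j t')).2; exists t'.
    by exists phi'; rewrite phi'pi.
  case/negP: pix; apply/eqP/kerpi/rejE => phi.
  by apply/eqP/negPn/negP => ?; apply: all0; exists phi.
have [rho rhoj] := Ext1_zero_extend psi ((clC_Ext1P Q).1 CQ) (conj j_inj (conj pi_surj kerpi)).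
by rewrite -rhoj; apply/(rejE (j t)).2; exists t.
Qed.

End Cotilting.

(** * Left almost split morphisms *)

Section SplitMonomorphisms.
Variable R : pzRingType.
Local Notation Mod := (lmodType R^c).

Lemma split_mono_factor (X Y Z : Mod) (f : {linear X -> Y}) (h : {linear Y -> Z})
    (g : {linear X -> Z}) :
  (forall x, g x = h (f x)) -> split_mono g -> split_mono f.
Proof. by move=> ghf [r rg]; exists (r \o h) => x /=; rewrite -ghf rg. Qed.

Lemma split_mono_trivial (X Y : Mod) (f : {linear X -> Y}) :
  (forall x : X, x = 0) -> split_mono f.
Proof. by move=> X0; exists \0 => x; apply/esym/X0. Qed.

Lemma nonzero_modP (X : Mod) : nonzero_mod X <-> ~ (forall x : X, x = 0).
Proof.
split=> [[x x0] X0 | nX0]; first by rewrite (X0 x) eqxx in x0.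
by apply: contrapT => nnz; apply: nX0 => x; apply/eqP/negPn/negP => x0; apply: nnz; exists x.
Qed.

Lemma automorphism_inv (X : Mod) (g : {linear X -> X}) : automorphism g ->
  exists g' : {linear X -> X}, cancel g g' /\ cancel g' g.
Proof. by case=> g' gK Kg; exists (linmap (can2_linear gK Kg)). Qed.

Lemma bijective_id_add_swap (L M : Mod) (a : {linear L -> M}) (d : {linear M -> L}) :
  bijective (fun x => x + d (a x)) -> bijective (fun m => m + a (d m)).
Proof.
move=> [w wK Kw]; exists (fun m => m - a (w (d m))) => m.
  by have wK' : w (d m + d (a (d m))) = d m := wK (d m); rewrite linearD wK' addrK.
have Kw' : w (d m) + d (a (w (d m))) = d m := Kw (d m).
by rewrite linearB -{2}Kw' addrK subrK.
Qed.

Section LeftAlmostSplitEndomorphisms.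
Variables (X Y : Mod) (f : {linear X -> Y}).
Hypotheses (f_nsplit : ~ split_mono f)
  (f_las : forall g : {linear X -> X}, ~ split_mono g ->
     exists h : {linear Y -> X}, forall x, g x = h (f x)).

Lemma nonsplit_through (d : {linear Y -> X}) : ~ split_mono (d \o f).
Proof. by move/(@split_mono_factor _ _ _ f d (d \o f) (fun _ => erefl)). Qed.

Lemma nonsplit_endo_add (g1 g2 g : {linear X -> X}) : (forall x, g x = g1 x + g2 x) ->
  ~ split_mono g1 -> ~ split_mono g2 -> ~ split_mono g.
Proof.
move=> gE /f_las [h1 g1h1] /f_las [h2 g2h2] g_split; apply: f_nsplit.
by apply: (split_mono_factor (h := h1 \+ h2)) g_split => x; rewrite gE /= g1h1 g2h2.
Qed.

(* The endomorphisms of X that are not split monomorphisms factor through f, so they are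
   closed under sums.  As 1 = (1 + d f) - d f, the map 1 + d f is a split monomorphism, and
   as 1 = r + r d f for a retraction r, so is r. *)
Lemma bijective_id_add_las (d : {linear Y -> X}) : bijective (fun x => x + d (f x)).
Proof.
have id_split : split_mono (idfun : {linear X -> X}) by exists idfun.
pose v : {linear X -> X} := idfun \+ (d \o f).
have [r rv] : split_mono v.
  apply: contrapT => nv.
  apply: (nonsplit_endo_add (g := idfun) _ nv (nonsplit_through (d := \- d))) id_split.
  by move=> x /=; rewrite addrK.
have [s sr] : split_mono r.
  apply: contrapT => nr.
  apply: (nonsplit_endo_add (g := idfun) _ nr (nonsplit_through (d := r \o d))) id_split.
  by move=> x /=; rewrite -linearD; have := rv x.
have sv y : s y = v y by rewrite -{1}(rv y) sr.
by exists r => // x; rewrite -[RHS]sr sv.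
Qed.

End LeftAlmostSplitEndomorphisms.

End SplitMonomorphisms.

(** * Almost split sequences in Cogen(C) *)

Section AlmostSplitSequences.
Variable R : pzRingType.
Local Notation Mod := (lmodType R^c).
Variable C : Mod.
Hypothesis cotC : cotilting C.
Variables (L M N : Mod) (a : {linear L -> M}) (b : {linear M -> N}).
Hypothesis sesab : ses a b.

Let a_inj : injective a. Proof. exact: proj1 sesab. Qed.
Let b_surj n : exists m, b m = n. Proof. exact: (proj2 sesab).1 n. Qed.
Let kerb m : b m = 0 <-> exists l, a l = m. Proof. exact: (proj2 sesab).2 m. Qed.
Let ba0 l : b (a l) = 0. Proof. exact: ses_comp0 sesab l. Qed.

Section KernelAlmostSplit.
Hypotheses (PL : inProd C L) (las_a : strong_left_almost_split (clC C) a).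

Let CM : clC C M. Proof. by case: las_a => _ []. Qed.
Let a_nsplit : ~ split_mono a. Proof. by case: las_a => _ [_ []]. Qed.
Let a_factor (Z : Mod) (g : {linear L -> Z}) : clC C Z -> ~ split_mono g ->
  exists h : {linear M -> Z}, forall l, g l = h (a l).
Proof. by case: las_a => _ [_ [_ las]] CZ /(las Z g CZ) [h []]; exists h. Qed.

Let a_factor_unique (Z : Mod) (g : {linear L -> Z}) (h1 h2 : {linear M -> Z}) :
  clC C Z -> ~ split_mono g -> (forall l, g l = h1 (a l)) -> (forall l, g l = h2 (a l)) ->
  forall m, h1 m = h2 m.
Proof.
case: las_a => _ [_ [_ las]] CZ /(las Z g CZ) [h [_ hu]] gh1 gh2 m.
by rewrite (hu _ gh1) (hu _ gh2).
Qed.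

Let zero_nsplit (Z : Mod) : ~ split_mono (\0 : {linear L -> Z}).
Proof.
move=> [r r0]; apply: a_nsplit; apply: split_mono_trivial => l.
by rewrite -(r0 l) /= linear0.
Qed.

Lemma las_coker_clQ : clQ C N.
Proof.
move=> f n; have [m <-] := b_surj n.
apply: (a_factor_unique (g := \0) (h1 := f \o b) (h2 := \0) (clC_self C)).
- exact: zero_nsplit.
- by move=> l; rewrite /= ba0 linear0.
- by [].
Qed.

Lemma las_coker_nonzero : nonzero_mod N.
Proof.
apply/nonzero_modP => N0; apply: a_nsplit.
have [m | r ar] := factor_through_mono (phi := idfun) a_inj; first exact/kerb/N0.
by exists r => l; apply: a_inj; rewrite ar.
Qed.

Lemma las_coker_sub_clC (S : Mod) (i : {linear S -> N}) :
  injective i -> ~ (forall n, exists s, i s = n) -> clC C S.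
Proof.
move=> i_inj i_nsurj.
have [P [p1 [p2 pb]]] := pullback_exists b i; have [comm _ _] := pb.
have [aS [sesS p1aS]] := pullback_ses pb sesab.
have CP : clC C P := clC_sub (pullback_mono pb i_inj) CM.
have [aS_split | aS_nsplit] := pselect (split_mono aS).
  exact: clC_split_coker sesS aS_split CP.
have [h haS] := a_factor CP aS_nsplit.
have p1h : forall m, p1 (h m) = m.
  by apply: (a_factor_unique CM a_nsplit (h1 := p1 \o h) (h2 := idfun)) => l //=;
    rewrite -haS p1aS.
case: i_nsurj => n; have [m <-] := b_surj n.
by exists (p2 (h m)); rewrite -comm p1h.
Qed.

Lemma las_coker_ext_split (A B : Mod) (f : {linear A -> B}) (g : {linear B -> N}) :
  ses f g -> clC C A -> clQ C B -> split_mono f.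
Proof.
move=> sesfg CA QB; have [_ [g_surj _]] := sesfg.
have [P [p1 [p2 pb]]] := pullback_exists b g; have [comm _ _] := pb.
have [a' [sesa' p1a']] := pullback_ses pb sesab.
have [f' [sesf' _]] := pullback_ses (is_pullback_sym pb) sesfg.
have CP : clC C P := clC_ext cotC sesf' CA CM.
have [a'_split | a'_nsplit] := pselect (split_mono a').
  have B0 := clQ_clC_trivial QB (clC_split_coker sesa' a'_split CP).
  case/nonzero_modP: las_coker_nonzero => n; have [y <-] := g_surj n.
  by rewrite (B0 y) linear0.
have [h a'h] := a_factor CP a'_nsplit.
have p1h : forall m, p1 (h m) = m.
  by apply: (a_factor_unique CM a_nsplit (h1 := p1 \o h) (h2 := idfun)) => l //=;
    rewrite -a'h p1a'.
have [m /kerb [l <-] | s sb] := factor_through_epi (phi := p2 \o h) b_surj.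
  by rewrite /= -a'h (ses_comp0 sesa').
apply/(ses_split_monoP sesfg); exists s => n; have [m <-] := b_surj n.
by rewrite sb /= -comm p1h.
Qed.

Lemma las_coker_ext_clQ (A B : Mod) (f : {linear A -> B}) (g : {linear B -> N}) :
  ses f g -> clQ C B -> clQ C A.
Proof.
move=> sesfg QB u x.
have [U [j [v [j_inj jv v_surj]]]] := image_factorization u.
have [B' [f' [eps [po f'_inj _]]]] := pushout_exists f v; have [comm gen _] := po.
have [g' [sesg' _]] := pushout_ses po sesfg (f'_inj (proj1 sesfg)).
have QB' : clQ C B'.
  apply: (clQ_quot (q := eps)) QB => y; have [k [e ->]] := gen y; have [z <-] := v_surj k.
  by exists (f z + e); rewrite linearD comm.
have [r rf'] := las_coker_ext_split sesg' (clC_sub j_inj (clC_self C)) QB'.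
have QU : clQ C U by apply: (clQ_quot (q := r)) QB' => y; exists (f' y).
by rewrite -jv (clQ_clC_trivial QU (clC_sub j_inj (clC_self C)) (v x)) linear0.
Qed.

Lemma las_coker_atf : almost_torsion_free C N.
Proof.
split; first exact: las_coker_nonzero.
split; [exact: las_coker_sub_clC | exact: las_coker_ext_clQ].
Qed.

Lemma las_coker_special_cover : special_C_cover C b.
Proof.
split; first exact: b_surj; split; first exact: CM.
split; first by exists L, a; split; [|split; [exact: kerb | exact: inProd_clCperp]].
move=> g bg.
have [m | d ad] := factor_through_mono (phi := g \- idfun) a_inj.
  by apply/kerb; rewrite /= linearB bg subrr.
have las_L (h : {linear L -> L}) :
    ~ split_mono h -> exists h' : {linear M -> L}, forall l, h l = h' (a l).
  exact: a_factor (clC_sub a_inj CM).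
move: (bijective_id_add_swap (bijective_id_add_las a_nsplit las_L d)) => /eq_bij; apply=> m.
by rewrite ad /= addrC subrK.
Qed.

End KernelAlmostSplit.

Section CoverAlmostSplit.
Hypotheses (QN : clQ C N) (atfN : almost_torsion_free C N) (cov : special_C_cover C b).

Let CM : clC C M. Proof. by case: cov => _ []. Qed.

Lemma cover_kernel_clCperp : clCperp C L.
Proof.
have [_ [_ [[K [k [k_inj [kerk perpK]]]] _]]] := cov.
have [l | s ks] := factor_through_mono (phi := a) k_inj; first by apply/kerk.
have [x | r ar] := factor_through_mono (phi := k) a_inj; first by apply/kerb/kerk; exists x.
move=> X CX; apply: (Ext1_zero_retract (s := s) (r := r)) (perpK X CX) => l.
by apply: a_inj; rewrite ar ks.
Qed.

Lemma cover_kernel_inProd : inProd C L.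
Proof. exact (inProd_clC_clCperp cotC (clC_sub a_inj CM) cover_kernel_clCperp). Qed.

Lemma cover_kernel_nsplit : ~ split_mono a.
Proof.
move=> a_split; have [/nonzero_modP nzN _] := atfN; apply: nzN.
exact: clQ_clC_trivial QN (clC_split_coker sesab a_split CM).
Qed.

(* If E were torsion-free, e would lift along b because L is Ext-injective for Cogen(C);
   this gives an endomorphism of M over N, hence an automorphism, whose inverse produces
   a retraction of g. *)
Lemma cover_pushout_nclC (Z E : Mod) (g : {linear L -> Z}) (z : {linear Z -> E})
    (e : {linear E -> N}) (eps : {linear M -> E}) :
  ses z e -> (forall l, eps (a l) = z (g l)) -> (forall m, e (eps m) = b m) ->
  ~ split_mono g -> ~ clC C E.
Proof.
move=> sesze epsa eeps g_nsplit CE; apply: g_nsplit; have [_ [_ [_ min]]] := cov.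
have [tau btau] := Ext1_zero_lift e (cover_kernel_clCperp CE) sesab.
have [gi [gamK Kgam]] := automorphism_inv (min (tau \o eps) (fun m => etrans (btau _) (eeps m))).
have bgi y : b (gi y) = b y by rewrite -{2}(Kgam y) /= btau eeps.
have [x | rho arho] := factor_through_mono (phi := gi \o tau \o z) a_inj.
  by apply/kerb; rewrite /= bgi btau (ses_comp0 sesze).
by exists rho => l; apply: a_inj; rewrite arho /= -epsa; apply: gamK.
Qed.

Lemma atf_reject_onto_split (Z E T : Mod) (z : {linear Z -> E}) (e : {linear E -> N})
    (j : {linear T -> E}) :
  ses z e -> clC C Z -> injective j -> clQ C T -> (forall n, exists t, e (j t) = n) ->
  split_mono z.
Proof.
move=> sesze CZ j_inj QT ej_surj; have [z_inj [_ kere]] := sesze; have [_ [_ extN]] := atfN.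
have [K0 [k [k_inj kerej]]] := kernel_embedding (e \o j).
have sesk : ses k (e \o j) := conj k_inj (conj ej_surj kerej).
have QK0 : clQ C K0 := extN _ _ k (e \o j) sesk QT.
have [x | nu znu] := factor_through_mono (phi := j \o k) z_inj.
  by apply/kere/kerej; exists x.
have nu_inj : injective nu by move=> x y /(congr1 z); rewrite !znu /= => /j_inj /k_inj.
have K00 := clQ_clC_trivial QK0 (clC_sub nu_inj CZ).
have [t /kerej [x <-] | s ejs] := factor_through_epi (p := e \o j) (phi := idfun) ej_surj.
  by rewrite (K00 x) linear0.
apply/(ses_split_monoP sesze); exists (j \o s) => n; have [t <-] := ej_surj n.
by rewrite /= ejs.
Qed.

(* The reject T of C in E is torsion; its image in N is either all of N or a proper
   submodule, which is then both torsion-free and torsion. *)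
Lemma atf_ext_clC_or_split (Z E : Mod) (z : {linear Z -> E}) (e : {linear E -> N}) :
  ses z e -> clC C Z -> clC C E \/ split_mono z.
Proof.
move=> sesze CZ; have [z_inj [_ kere]] := sesze; have [_ [subN _]] := atfN.
have [T [j [j_inj rejE QT]]] := reject_clQ cotC E.
have [U [jU [v [jU_inj jUv v_surj]]]] := image_factorization (e \o j).
have [jU_surj | jU_nsurj] := pselect (forall n, exists y, jU y = n).
  right; apply: atf_reject_onto_split sesze CZ j_inj QT _ => n.
  by have [y <-] := jU_surj n; have [t <-] := v_surj y; exists t; rewrite jUv.
left; have U0 := clQ_clC_trivial (clQ_quot v_surj QT) (subN U jU jU_inj jU_nsurj).
have [t | nu znu] := factor_through_mono (phi := j) z_inj.
  by apply/kere; have := jUv t; rewrite (U0 (v t)) linear0.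
have nu_inj : injective nu by move=> x y /(congr1 z); rewrite !znu => /j_inj.
have T0 := clQ_clC_trivial QT (clC_sub nu_inj CZ).
apply/clC_sepP => x x0; apply: contrapT => nphi; case/negP: x0; apply/eqP.
have [|t <-] := (rejE x).1; last by rewrite (T0 t) linear0.
by move=> phi; apply/eqP/negPn/negP => phix; apply: nphi; exists phi.
Qed.

Lemma cover_las : strong_left_almost_split (clC C) a.
Proof.
split; first exact: clC_sub a_inj CM; split; first exact: CM.
split=> [|Z g CZ g_nsplit]; first exact: cover_kernel_nsplit.
have [E [z [eps [po z_inj _]]]] := pushout_exists a g; have [comm _ _] := po.
have [e [sesze eeps]] := pushout_ses po sesab (z_inj a_inj).
have [CE | [r rz]] := atf_ext_clC_or_split sesze CZ.
  by case: (cover_pushout_nclC sesze comm eeps g_nsplit CE).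
exists (r \o eps); split=> [l | h gh m]; first by rewrite /= comm rz.
have [n /kerb [l <-] | w wb] := factor_through_epi (phi := h \- (r \o eps)) b_surj.
  by rewrite /= -gh comm rz subrr.
apply/subr0_eq; have := wb m; rewrite /= => <-; exact: (clQ_clC_hom0 w QN CZ (b m)).
Qed.

End CoverAlmostSplit.

Section CokernelAlmostSplit.
Hypotheses (PM : inProd C M) (las_b : strong_left_almost_split (clC C) b).

Let CM : clC C M. Proof. by case: las_b. Qed.
Let CN : clC C N. Proof. by case: las_b => _ []. Qed.
Let b_nsplit : ~ split_mono b. Proof. by case: las_b => _ [_ []]. Qed.

Let b_annihilates (Z : Mod) (v : {linear M -> Z}) : clC C Z -> ~ split_mono v ->
  forall l, v (a l) = 0.
Proof.
case: las_b => _ [_ [_ las]] CZ /(las Z v CZ) [h [vh _]] l.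
by rewrite vh ba0 linear0.
Qed.

Lemma las_kernel_nonzero : nonzero_mod L.
Proof.
apply/nonzero_modP => L0; apply: b_nsplit.
have [m /kerb [l <-] | r rb] := factor_through_epi (phi := idfun) b_surj.
  by rewrite (L0 l) linear0.
by exists r.
Qed.

Lemma las_kernel_quot_clQ (P : Mod) (q : {linear L -> P}) :
  (forall p, exists l, q l = p) -> ~ injective q -> clQ C P.
Proof.
move=> q_surj q_ninj phi p; have [l <-] := q_surj p.
have [l0 [l00 ql0]] : exists l0, l0 != 0 /\ q l0 = 0.
  apply: contrapT => nl0; apply: q_ninj; apply: raddf_inj => x qx.
  by apply/eqP/negPn/negP => x0; apply: nl0; exists x.
have [v va] := Ext1_zero_extend (phi \o q) ((clC_Ext1P cotC N).1 CN) sesab.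
have [[r rv] | v_nsplit] := pselect (split_mono v).
  by case/negP: l00; apply/eqP/a_inj; rewrite -[a l0](rv) va /= ql0 !linear0.
by rewrite -[phi (q l)]/((phi \o q) l) -va (b_annihilates (clC_self C) v_nsplit).
Qed.

Lemma las_kernel_ext_clC (A B : Mod) (f : {linear L -> A}) (g : {linear A -> B}) :
  ses f g -> clC C A -> clC C B.
Proof.
move=> sesfg CA.
have [P [i' [eps [po i'_inj eps_inj]]]] := pushout_exists f a; have [comm _ _] := po.
have [p' [sesi' _]] := pushout_ses po sesfg (i'_inj (proj1 sesfg)).
have [pi [seseps _]] := pushout_ses (is_pushout_sym po) sesab (eps_inj a_inj).
have CP : clC C P := clC_ext cotC seseps CA CN.
have [i'_split | i'_nsplit] := pselect (split_mono i').
  exact: clC_split_coker sesi' i'_split CP.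
case/nonzero_modP: las_kernel_nonzero => l; apply: (proj1 sesfg); apply: (eps_inj a_inj).
by rewrite comm (b_annihilates CP i'_nsplit) !linear0.
Qed.

Lemma las_kernel_at : almost_torsion C L.
Proof.
split; first exact: las_kernel_nonzero.
split; [exact: las_kernel_quot_clQ | exact: las_kernel_ext_clC].
Qed.

Lemma las_special_envelope : special_Cperp_envelope C a.
Proof.
split; first exact: a_inj; split; first exact: inProd_clCperp.
split; first by exists N, b; split; [exact: b_surj | split; [exact: kerb | exact: CN]].
move=> g ga.
have [m /kerb [l <-] | d db] := factor_through_epi (phi := g \- idfun) b_surj.
  by rewrite /= ga subrr.
have las_M (h : {linear M -> M}) :
    ~ split_mono h -> exists h' : {linear N -> M}, forall m, h m = h' (b m).
  by case: las_b => _ [_ [_ las]] /(las M h CM) [h' [hh' _]]; exists h'.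
move: (bijective_id_add_las b_nsplit las_M d) => /eq_bij; apply=> m.
by rewrite db /= addrC subrK.
Qed.

End CokernelAlmostSplit.

Section EnvelopeAlmostSplit.
Hypotheses (CL : clC C L) (atL : almost_torsion C L) (env : special_Cperp_envelope C a).

Let CN : clC C N.
Proof.
have [_ [_ [[P [c [_ [kerc CP]]]] _]]] := env.
have [m /kerb [l <-] | t tb] := factor_through_epi (phi := c) b_surj.
  by apply/kerc; exists l.
apply: (clC_sub (f := t)) CP; apply: raddf_inj => n; have [m <-] := b_surj n.
by move=> /(etrans (esym (tb m))) /kerc [l <-]; rewrite ba0.
Qed.

Let CM : clC C M. Proof. exact (clC_ext cotC sesab CL CN). Qed.

Lemma envelope_middle_inProd : inProd C M.
Proof. have [_ [perpM _]] := env; exact (inProd_clC_clCperp cotC CM perpM). Qed.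

Lemma envelope_coker_nsplit : ~ split_mono b.
Proof.
have [/nonzero_modP nzL _] := atL; move=> /split_mono_inj b_inj; apply: nzL => l.
by apply: a_inj; apply: b_inj; rewrite ba0 !linear0.
Qed.

(* If g a is injective, its cokernel is torsion-free, so a extends along g a to an
   endomorphism of M fixing L, hence an automorphism; otherwise the image of g a is a
   proper quotient of L, torsion but contained in Z. *)
Lemma envelope_annihilates (Z : Mod) (g : {linear M -> Z}) : clC C Z -> ~ split_mono g ->
  forall l, g (a l) = 0.
Proof.
move=> CZ g_nsplit; have [_ [quotL extL]] := atL; have [_ [perpM [_ min]]] := env.
have [U [j [v [j_inj jv v_surj]]]] := image_factorization (g \o a).
have [v_inj | v_ninj] := pselect (injective v); last first.
  move=> l; have := jv l; rewrite /= => <-.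
  by rewrite (clQ_clC_trivial (quotL U v v_surj v_ninj) (clC_sub j_inj CZ) (v l)) linear0.
have [Q [c [c_surj kerc]]] := cokernel_projection (g \o a).
have ga_inj : injective (g \o a) by move=> x y; rewrite -!jv => /j_inj /v_inj.
have sesc : ses (g \o a) c := conj ga_inj (conj c_surj kerc).
have [rho rhoga] := Ext1_zero_extend a (perpM Q (extL _ _ _ _ sesc CZ)) sesc.
have [gi [gamK _]] := automorphism_inv (min (rho \o g) rhoga).
by case: g_nsplit; exists (gi \o rho) => m; apply: gamK.
Qed.

Lemma envelope_las : strong_left_almost_split (clC C) b.
Proof.
split; first exact: CM; split; first exact: CN.
split=> [|Z g CZ g_nsplit]; first exact: envelope_coker_nsplit.
have [m /kerb [l <-] | h hb] := factor_through_epi (phi := g) b_surj.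
  exact: envelope_annihilates.
exists h; split=> [m | h' gh' n]; first by rewrite hb.
by have [m <-] := b_surj n; rewrite -gh' hb.
Qed.

End EnvelopeAlmostSplit.

End AlmostSplitSequences.

Theorem theorem4p2 (R : pzRingType) (C : lmodType R^c) (hC : cotilting C)
  (L M N : lmodType R^c) (a : {linear L -> M}) (b : {linear M -> N})
  (hses : ses a b) :
  ((clQ C N /\ almost_torsion_free C N /\ special_C_cover C b) <->
     (inProd C L /\ strong_left_almost_split (clC C) a)) /\
  ((clC C L /\ almost_torsion C L /\ special_Cperp_envelope C a) <->
     (inProd C M /\ strong_left_almost_split (clC C) b)).
Proof.
split; split.
- case=> QN [atfN cov]; split.
  + exact (cover_kernel_inProd hC hses cov).
  + exact (cover_las hC hses QN atfN cov).
- case=> PL las_a; split; first exact (las_coker_clQ hses las_a).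
  split; first exact (las_coker_atf hC hses las_a).
  exact (las_coker_special_cover hC hses PL las_a).
- case=> CL [atL env]; split.
  + exact (envelope_middle_inProd hC hses CL env).
  + exact (envelope_las hC hses CL atL env).
- case=> PM las_b; split; first exact (clC_sub (proj1 hses) (proj1 las_b)).
  split; first exact (las_kernel_at hC hses las_b).
  exact (las_special_envelope hC hses PM las_b).
Qed.
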